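(* Under the hypotheses of the context, for every $T\ge1$, $$\sum_{t=0}^{T-1}\mathbb E\|x^t-\hat x^t\|^2\le\eta_g^2\Big(\sum_{s=1}^{T-1}(1-\delta_s)^s\Big)\sum_{t=0}^{T-2}\mathbb E\|\bar\Delta^t\|^2 .$$
   Context: A (possibly random) map $Q:\mathbb R^d\to\mathbb R^d$ is a quantizer with compression parameter $\delta\in(0,1]$ if $\mathbb E_Q\|Q(x)-x\|^2\le(1-\delta)\|x\|^2$ for all $x$, where $\mathbb E_Q$ is expectation over the internal randomness of $Q$; it is unbiased if $\mathbb E_Q[Q(x)]=x$ for all $x$. Hypotheses: $Q_s$ is an unbiased quantizer with parameter $\delta_s\in(0,1]$, $\eta_g>0$, $(\bar\Delta^t)_{t\ge0}$ are random vectors in $\mathbb R^d$ with finite second moments, $x^{t+1}=x^t+\eta_g\bar\Delta^t$, $\hat x^{t+1}=\hat x^t+Q_s(x^{t+1}-\hat x^t)$, $\hat x^0=x^0$, each application of $Q_s$ uses fresh internal randomness independent of $x^{t+1}-\hat x^t$, and $\mathbb E\langle x^t-\hat x^t,\bar\Delta^t\rangle=0$ for all $t$. *)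

(* Vectors of R^d are d.-tuple R, which
   MathComp-Analysis equips with the product (Borel) sigma-algebra. *)
From HB Require Import structures.
From mathcomp Require Import all_boot all_order all_algebra.
From mathcomp Require Import all_classical all_reals all_analysis.
Set Implicit Arguments. Unset Strict Implicit. Unset Printing Implicit Defensive.
Import Order.TTheory GRing.Theory Num.Theory.
Local Open Scope classical_set_scope.
Local Open Scope ring_scope.

Section Vectors.
Variables (R : realType) (d : nat).
Definition vadd (u v : d.-tuple R) : d.-tuple R := [tuple tnth u i + tnth v i | i < d].
Definition vsub (u v : d.-tuple R) : d.-tuple R := [tuple tnth u i - tnth v i | i < d].
Definition vscale (a : R) (v : d.-tuple R) : d.-tuple R := [tuple a * tnth v i | i < d].
Definition vdot (u v : d.-tuple R) : R := \sum_(i < d) tnth u i * tnth v i.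
Definition sqnorm (v : d.-tuple R) : R := vdot v v.
End Vectors.

Definition indep_elems {dO d1 d2} {Omega : measurableType dO}
  {T1 : measurableType d1} {T2 : measurableType d2} {R : realType}
  (P : probability Omega R) (X : Omega -> T1) (Y : Omega -> T2) : Prop :=
  forall (A : set T1) (B : set T2), measurable A -> measurable B ->
    P (X @^-1` A `&` Y @^-1` B) = (P (X @^-1` A) * P (Y @^-1` B))%E.

Definition has_law {dO dT} {Omega : measurableType dO} {T : measurableType dT}
  {R : realType} (P : probability Omega R) (Y : Omega -> T)
  (mu : probability T R) : Prop :=
  forall A : set T, measurable A -> P (Y @^-1` A) = mu A.

(* Q : R^d -> (Omq -> R^d), a random map with internal randomness w ~ Pq,
   is a quantizer with compression parameter delta. *)
Definition is_quantizer {dq} {Omq : measurableType dq} {R : realType} {d : nat}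
  (Pq : probability Omq R) (Q : d.-tuple R -> Omq -> d.-tuple R) (delta : R) : Prop :=
  forall x : d.-tuple R,
    ('E_Pq[fun w => sqnorm (vsub (Q x w) x)] <= ((1 - delta) * sqnorm x)%:E)%E.

Definition is_unbiased {dq} {Omq : measurableType dq} {R : realType} {d : nat}
  (Pq : probability Omq R) (Q : d.-tuple R -> Omq -> d.-tuple R) : Prop :=
  forall (x : d.-tuple R) (i : 'I_d), ('E_Pq[fun w => tnth (Q x w) i] = (tnth x i)%:E)%E.

From HB Require Import structures.
From mathcomp Require Import all_boot all_order all_algebra.
From mathcomp Require Import all_classical all_reals all_analysis.
From mathcomp Require Import measurable_realfun ring lra.
Import Order.TTheory GRing.Theory Num.Theory.

Local Open Scope classical_set_scope.
Local Open Scope ring_scope.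

(* Write e^t = x^t - xhat^t.  Since e^{t+1} = v - Q_s(v) with v = x^{t+1} - xhat^t
   and the randomness of Q_s is fresh, conditioning on v gives
   E|e^{t+1}|^2 <= (1 - delta) E|v|^2, while v = e^t + eta Delta^t with
   E<e^t, Delta^t> = 0 gives E|v|^2 = E|e^t|^2 + eta^2 E|Delta^t|^2.
   Unrolling this recursion from e^0 = 0 writes E|e^t|^2 as a geometric
   convolution of the E|Delta^k|^2; summing over t and exchanging the sums,
   each E|Delta^k|^2 gets a weight at most eta^2 sum_{s=1}^{T-1} (1 - delta)^s. *)

Section VectorAlgebra.
Context (R : realType) (d : nat).
Implicit Types u v w : d.-tuple R.

Lemma sqnorm_ge0 u : 0 <= sqnorm u.
Proof. by rewrite /sqnorm /vdot sumr_ge0 // => i _; exact: sqr_ge0. Qed.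

Lemma sqnorm_vadd_vscale u v a :
  sqnorm (vadd u (vscale a v)) = sqnorm u + (2 * a * vdot u v + a ^+ 2 * sqnorm v).
Proof.
rewrite /sqnorm /vdot !mulr_sumr -!big_split /=; apply: eq_bigr => i _.
by rewrite /vadd /vscale !tnth_mktuple; ring.
Qed.

Lemma vsub_vaddl u v w : vsub (vadd u v) w = vadd (vsub u w) v.
Proof. by apply: eq_from_tnth => i; rewrite !tnth_mktuple addrAC. Qed.

Lemma vsub_vaddr u v w : vsub u (vadd v w) = vsub (vsub u v) w.
Proof. by apply: eq_from_tnth => i; rewrite !tnth_mktuple opprD addrA. Qed.

Lemma sqnorm_vsubC u v : sqnorm (vsub u v) = sqnorm (vsub v u).
Proof. by apply: eq_bigr => i _; rewrite !tnth_mktuple; ring. Qed.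

Lemma sqnorm_vsubxx u : sqnorm (vsub u u) = 0.
Proof. by rewrite /sqnorm /vdot big1 // => i _; rewrite tnth_mktuple subrr mulr0. Qed.

Lemma normr_vdot_le u v : `|vdot u v| <= sqnorm u + sqnorm v.
Proof.
rewrite /sqnorm /vdot -big_split /=; apply: (le_trans (ler_norm_sum _ _ _)).
apply: ler_sum => i _; rewrite normrM.
have := sqr_ge0 (`|tnth u i| - `|tnth v i|).
have normu2 : `|tnth u i| ^+ 2 = tnth u i * tnth u i by rewrite real_normK ?expr2 // num_real.
have normv2 : `|tnth v i| ^+ 2 = tnth v i * tnth v i by rewrite real_normK ?expr2 // num_real.
nra.
Qed.

End VectorAlgebra.
Arguments sqnorm_ge0 {R d}.

Section VectorMeasurability.
Context (R : realType) (d : nat) (dT : measure_display) (T : measurableType dT).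
Implicit Types f g : T -> d.-tuple R.

Lemma measurable_vadd f g : measurable_fun setT f -> measurable_fun setT g ->
  measurable_fun setT (fun w => vadd (f w) (g w)).
Proof.
move=> /measurable_fun_tnthP mf /measurable_fun_tnthP mg.
apply/measurable_fun_tnthP => i; rewrite /comp.
under eq_fun do rewrite tnth_mktuple.
exact: measurable_funD (mf i) (mg i).
Qed.

Lemma measurable_vsub f g : measurable_fun setT f -> measurable_fun setT g ->
  measurable_fun setT (fun w => vsub (f w) (g w)).
Proof.
move=> /measurable_fun_tnthP mf /measurable_fun_tnthP mg.
apply/measurable_fun_tnthP => i; rewrite /comp.
under eq_fun do rewrite tnth_mktuple.
exact: measurable_funB (mf i) (mg i).
Qed.

Lemma measurable_vscale a f : measurable_fun setT f ->
  measurable_fun setT (fun w => vscale a (f w)).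
Proof.
move=> /measurable_fun_tnthP mf.
apply/measurable_fun_tnthP => i; rewrite /comp.
under eq_fun do rewrite tnth_mktuple.
exact: measurable_funM (mf i).
Qed.

Lemma measurable_vdot f g : measurable_fun setT f -> measurable_fun setT g ->
  measurable_fun setT (fun w => vdot (f w) (g w)).
Proof.
move=> /measurable_fun_tnthP mf /measurable_fun_tnthP mg.
by apply: measurable_sum => i; exact: measurable_funM (mf i) (mg i).
Qed.

Lemma measurable_sqnorm f : measurable_fun setT f ->
  measurable_fun setT (fun w => sqnorm (f w)).
Proof. by move=> mf; exact: measurable_vdot. Qed.

End VectorMeasurability.
Arguments measurable_vadd {R d dT T f g}.
Arguments measurable_vsub {R d dT T f g}.
Arguments measurable_vscale {R d dT T} a {f}.
Arguments measurable_sqnorm {R d dT T f}.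

Section Expectation.
Context (R : realType) (d : nat)
  (dO : measure_display) (Omega : measurableType dO) (P : probability Omega R).
Local Open Scope ereal_scope.

Lemma integrable_expectation_ge0 (f : Omega -> R) : measurable_fun setT f ->
  (forall w, 0 <= f w)%R -> 'E_P[f] < +oo -> P.-integrable setT (EFin \o f).
Proof.
move=> mf f0 fin; apply/integrableP; split; first exact/measurable_EFinP.
rewrite unlock in fin; apply: le_lt_trans fin.
by under eq_integral => w _ do rewrite /= ger0_norm //.
Qed.

Lemma expectation_sqnorm_vadd_vscale (e D : Omega -> d.-tuple R) (a : R) :
  measurable_fun setT e -> measurable_fun setT D ->
  'E_P[fun w => sqnorm (e w)] < +oo -> 'E_P[fun w => sqnorm (D w)] < +oo ->
  'E_P[fun w => vdot (e w) (D w)] = 0 ->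
  'E_P[fun w => sqnorm (vadd (e w) (vscale a (D w)))] =
  'E_P[fun w => sqnorm (e w)] + (a ^+ 2)%:E * 'E_P[fun w => sqnorm (D w)].
Proof.
move=> me mD fe fD orth.
have ie := integrable_expectation_ge0 _ (measurable_sqnorm me) (fun w => sqnorm_ge0 _) fe.
have iD := integrable_expectation_ge0 _ (measurable_sqnorm mD) (fun w => sqnorm_ge0 _) fD.
have idot : P.-integrable setT (EFin \o (fun w => vdot (e w) (D w))).
  apply: le_integrable (integrableD _ ie iD) => //.
    exact/measurable_EFinP/measurable_vdot.
  move=> w _ /=; rewrite lee_fin [`|_ + _|%R]ger0_norm ?addr_ge0 ?sqnorm_ge0 //.
  exact: normr_vdot_le.
rewrite unlock in orth *.
under eq_integral do rewrite sqnorm_vadd_vscale !EFinD !EFinM.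
rewrite integralD //; last by apply: integrableD => //; exact: integrableZl.
rewrite integralD //; try exact: integrableZl.
by rewrite !integralZl // orth mule0 add0e.
Qed.

Section IndependentQuantization.
Context (dq : measure_display) (Omq : measurableType dq) (Pq : probability Omq R)
  (Q : d.-tuple R -> Omq -> d.-tuple R) (delta : R).
Hypothesis quantQ : is_quantizer Pq Q delta.
Hypothesis measurableQ : measurable_fun [set: d.-tuple R * Omq] (fun p => Q p.1 p.2).
Hypothesis delta_le1 : (delta <= 1)%R.

(* Independence identifies the joint law of (W, V) with Pq \x law(V), so
   Fubini-Tonelli reduces the bound to the pointwise quantizer inequality. *)
Lemma expectation_quantizer_error_le (V : Omega -> d.-tuple R) (W : Omega -> Omq) :
  measurable_fun setT V -> measurable_fun setT W -> has_law P W Pq ->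
  indep_elems P W V ->
  'E_P[fun w => sqnorm (vsub (Q (V w) (W w)) (V w))]
    <= (1 - delta)%:E * 'E_P[fun w => sqnorm (V w)].
Proof.
move=> mV mW lawW indepWV.
pose phi w := (W w, V w).
have mphi : measurable_fun setT phi by exact: measurable_fun_pair.
pose phim : {mfun Omega >-> (Omq * d.-tuple R)%type} :=
  HB.pack phi (isMeasurableFun.Build _ _ _ _ phi mphi).
pose Vm : {mfun Omega >-> d.-tuple R} :=
  HB.pack V (isMeasurableFun.Build _ _ _ _ V mV).
pose nu := distribution P Vm.
pose g (p : Omq * d.-tuple R) := (sqnorm (vsub (Q p.2 p.1) p.2))%:E.
have mg : measurable_fun setT g.
  apply/measurable_EFinP/measurable_sqnorm/measurable_vsub => //.
  exact: measurableT_comp measurableQ (measurable_fun_pair measurable_snd measurable_fst).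
have g0 p : 0 <= g p by rewrite lee_fin sqnorm_ge0.
have joint_law : \int[distribution P phim]_p g p = \int[Pq \x nu]_p g p.
  apply: eq_measure_integral => A mA _; apply/esym.
  apply: product_measure_unique => // B C mB mC.
  rewrite /nu /distribution /pushforward /=.
  change (P (phi @^-1` (B `*` C)) = Pq B * P (V @^-1` C)).
  by rewrite -lawW // -indepWV.
have -> : 'E_P[fun w => sqnorm (vsub (Q (V w) (W w)) (V w))] =
    \int[distribution P phim]_p g p.
  by rewrite unlock /distribution ge0_integral_pushforward.
rewrite joint_law fubini_tonelli2 //.
have one_sub_delta_ge0 : 0 <= (1 - delta)%:E by rewrite lee_fin subr_ge0.
have msq : measurable_fun setT (fun v : d.-tuple R => (sqnorm v)%:E).
  exact/measurable_EFinP/measurable_sqnorm.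
apply: (@le_trans _ _ (\int[nu]_v ((1 - delta)%:E * (sqnorm v)%:E))).
  apply: ge0_le_integral => //.
  - by move=> v _; apply: integral_ge0.
  - exact: measurable_fun_fubini_tonelli_G.
  - exact: emeasurable_funM.
  - by move=> v _; have := quantQ v; rewrite unlock -EFinM.
rewrite ge0_integralZl_EFin //; last by move=> v _; rewrite lee_fin sqnorm_ge0.
rewrite lee_wpmul2l // unlock ge0_integral_pushforward //.
by move=> v _; rewrite lee_fin sqnorm_ge0.
Qed.

End IndependentQuantization.
End Expectation.
Arguments expectation_quantizer_error_le {R d dO Omega P dq Omq Pq Q delta} _ _ _ {V W}.

Section ContractionRecursion.
Context (R : numDomainType) (a D : nat -> R) (q c : R).
Hypotheses (q_ge0 : 0 <= q) (c_ge0 : 0 <= c) (D_ge0 : forall t, 0 <= D t).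
Hypotheses (a0 : a 0%N = 0) (a_rec : forall t, a t.+1 <= q * (a t + c * D t)).

Lemma contraction_le_convolution t :
  a t <= c * \sum_(0 <= k < t) q ^+ (t - k) * D k.
Proof.
elim: t => [|t IH]; first by rewrite a0 big_geq // mulr0.
apply: le_trans (a_rec t) _.
have -> : \sum_(0 <= k < t.+1) q ^+ (t.+1 - k) * D k =
    q * (\sum_(0 <= k < t) q ^+ (t - k) * D k + D t).
  rewrite big_nat_recr //= subSnn expr1 mulrDr mulr_sumr; congr (_ + _).
  apply: eq_big_nat => k /andP[_ kt].
  by rewrite subSn ?(ltnW kt) // exprS mulrA.
by rewrite mulrCA ler_wpM2l // mulrDr lerD.
Qed.

Lemma sum_convolution_exchange T :
  \sum_(0 <= t < T) \sum_(0 <= k < t) q ^+ (t - k) * D k =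
  \sum_(0 <= k < T) D k * \sum_(1 <= s < T - k) q ^+ s.
Proof.
elim: T => [|T IH]; first by rewrite !big_geq.
rewrite big_nat_recr //= IH [in RHS]big_nat_recr //= subSnn.
rewrite [X in _ = _ + _ * X]big_geq // mulr0 addr0 -big_split /=.
apply: eq_big_nat => k /andP[_ kT].
rewrite subSn ?(ltnW kT) // big_nat_recr /=; last by rewrite subn_gt0.
by rewrite mulrDr [q ^+ _ * _]mulrC.
Qed.

Lemma sum_contraction_le T : (1 <= T)%N ->
  \sum_(0 <= t < T) a t <= (c * \sum_(1 <= s < T) q ^+ s) * \sum_(0 <= t < T.-1) D t.
Proof.
case: T => // n _ /=.
apply: le_trans (ler_sum _ (fun t _ => contraction_le_convolution t)) _.
rewrite -mulr_sumr -mulrA ler_wpM2l // sum_convolution_exchange.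
rewrite big_nat_recr //= subSnn [X in _ + _ * X]big_geq // mulr0 addr0.
rewrite mulr_sumr; apply: ler_sum_nat => k /andP[_ kn].
rewrite mulrC ler_wpM2r //.
rewrite [leRHS](big_cat_nat _ (n := n.+1 - k)) //=; last by rewrite leq_subr.
  by rewrite lerDl sumr_ge0 // => i _; exact: exprn_ge0.
by rewrite subSn ?(ltnW kn).
Qed.

End ContractionRecursion.

Section ExtendedContractionRecursion.
Local Open Scope ereal_scope.
Context (R : realType) (a D : nat -> \bar R) (q c : R).
Hypotheses (q_ge0 : (0 <= q)%R) (c_ge0 : (0 <= c)%R).
Hypotheses (a_ge0 : forall t, 0 <= a t) (D_ge0 : forall t, 0 <= D t).
Hypothesis D_fin : forall t, D t \is a fin_num.
Hypothesis a0 : a 0%N = 0.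
Hypothesis a_rec :
  forall t, a t \is a fin_num -> a t.+1 <= q%:E * (a t + c%:E * D t).

Lemma contraction_fin_num t : a t \is a fin_num.
Proof.
elim: t => [|t IH]; first by rewrite a0.
rewrite ge0_fin_numE //; apply: le_lt_trans (a_rec _ IH) _.
rewrite -(fineK IH) -(fineK (D_fin t)).
by rewrite -[X in _ * (_ + X)]EFinM -EFinD -EFinM ltry.
Qed.

Lemma esum_contraction_le T : (1 <= T)%N ->
  \sum_(0 <= t < T) a t <= (c * \sum_(1 <= s < T) q ^+ s)%:E * \sum_(0 <= t < T.-1) D t.
Proof.
move=> T1.
have aE t : a t = (fine (a t))%:E by rewrite fineK // contraction_fin_num.
have DE t : D t = (fine (D t))%:E by rewrite fineK.
rewrite (eq_bigr _ (fun t _ => aE t)) (eq_bigr _ (fun t _ => DE t)) !sumEFin.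
rewrite -EFinM lee_fin; apply: sum_contraction_le => // [t||t].
- exact: fine_ge0.
- by rewrite a0.
- rewrite -lee_fin EFinM EFinD EFinM -!aE -DE.
  exact/a_rec/contraction_fin_num.
Qed.

End ExtendedContractionRecursion.

Section QuantizedIterates.
Local Open Scope ereal_scope.
Context (R : realType) (d : nat)
  (dO : measure_display) (Omega : measurableType dO) (P : probability Omega R)
  (dq : measure_display) (Omq : measurableType dq) (Pq : probability Omq R)
  (Qs : d.-tuple R -> Omq -> d.-tuple R) (delta eta : R)
  (Delta x xhat : nat -> Omega -> d.-tuple R) (xi : nat -> Omega -> Omq).
Hypothesis measurableQs : measurable_fun [set: d.-tuple R * Omq] (fun p => Qs p.1 p.2).
Hypothesis measurable_Delta : forall t, measurable_fun [set: Omega] (Delta t).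
Hypothesis measurable_xi : forall t, measurable_fun [set: Omega] (xi t).
Hypothesis measurable_x0 : measurable_fun [set: Omega] (x 0%N).
Hypothesis x_rec : forall t w, x t.+1 w = vadd (x t w) (vscale eta (Delta t w)).
Hypothesis xhat0 : forall w, xhat 0%N w = x 0%N w.
Hypothesis xhat_rec : forall t w,
  xhat t.+1 w = vadd (xhat t w) (Qs (vsub (x t.+1 w) (xhat t w)) (xi t w)).

Lemma measurable_iterate t : measurable_fun setT (x t).
Proof.
elim: t => // t IH.
rewrite (_ : x t.+1 = fun w => vadd (x t w) (vscale eta (Delta t w))).
  exact: measurable_vadd IH (measurable_vscale _ (measurable_Delta t)).
by apply/funext => w; rewrite x_rec.
Qed.

Lemma measurable_estimate t : measurable_fun setT (xhat t).
Proof.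
elim: t => [|t IH]; first by rewrite (_ : xhat 0%N = x 0%N) //; exact/funext.
rewrite (_ : xhat t.+1 = fun w =>
    vadd (xhat t w) (Qs (vsub (x t.+1 w) (xhat t w)) (xi t w))); last first.
  by apply/funext => w; rewrite xhat_rec.
apply: (measurable_vadd IH).
apply: measurableT_comp measurableQs (measurable_fun_pair _ (measurable_xi t)).
exact: measurable_vsub (measurable_iterate t.+1) IH.
Qed.

Lemma expectation_error0 : 'E_P[fun w => sqnorm (vsub (x 0%N w) (xhat 0%N w))] = 0.
Proof.
rewrite (_ : (fun w => _) = cst 0%R) ?expectation_cst //.
by apply/funext => w; rewrite xhat0 sqnorm_vsubxx.
Qed.

Hypotheses (quantQs : is_quantizer Pq Qs delta) (delta_le1 : (delta <= 1)%R).
Hypothesis law_xi : forall t, has_law P (xi t) Pq.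
Hypothesis indep_xi : forall t, indep_elems P (xi t) (fun w => vsub (x t.+1 w) (xhat t w)).
Hypothesis finite_Delta : forall t, 'E_P[fun w => sqnorm (Delta t w)] < +oo.
Hypothesis orthogonal_Delta : forall t,
  'E_P[fun w => vdot (vsub (x t w) (xhat t w)) (Delta t w)] = 0.

(* x^{t+1} - xhat^{t+1} = (x^{t+1} - xhat^t) - Q_s(x^{t+1} - xhat^t), and
   x^{t+1} - xhat^t = (x^t - xhat^t) + eta Delta^t with orthogonal summands. *)
Lemma expectation_error_step t :
  'E_P[fun w => sqnorm (vsub (x t w) (xhat t w))] \is a fin_num ->
  'E_P[fun w => sqnorm (vsub (x t.+1 w) (xhat t.+1 w))] <=
  (1 - delta)%:E * ('E_P[fun w => sqnorm (vsub (x t w) (xhat t w))] +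
                    (eta ^+ 2)%:E * 'E_P[fun w => sqnorm (Delta t w)]).
Proof.
move=> fin_err.
have mx := measurable_iterate; have mxhat := measurable_estimate.
under eq_fun do rewrite xhat_rec vsub_vaddr sqnorm_vsubC.
apply: le_trans (expectation_quantizer_error_le quantQs measurableQs delta_le1
  (measurable_vsub (mx t.+1) (mxhat t)) (measurable_xi t) (law_xi t) (indep_xi t)) _.
under eq_fun do rewrite x_rec vsub_vaddl.
rewrite expectation_sqnorm_vadd_vscale //; first exact: measurable_vsub.
by rewrite ltey_eq fin_err.
Qed.

End QuantizedIterates.

Theorem mainTheorem9
  (R : realType) (d : nat)
  (dO : measure_display) (Omega : measurableType dO) (P : probability Omega R)
  (dq : measure_display) (Omq : measurableType dq) (Pq : probability Omq R)
  (Qs : d.-tuple R -> Omq -> d.-tuple R) (delta_s eta_g : R)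
  (Delta x xhat : nat -> Omega -> d.-tuple R) (xi : nat -> Omega -> Omq) :
  0 < delta_s <= 1 ->
  is_quantizer Pq Qs delta_s ->
  is_unbiased Pq Qs ->
  measurable_fun [set: d.-tuple R * Omq] (fun p => Qs p.1 p.2) ->
  0 < eta_g ->
  (forall t, measurable_fun [set: Omega] (Delta t)) ->
  (forall t, ('E_P[fun w => sqnorm (Delta t w)] < +oo)%E) ->
  measurable_fun [set: Omega] (x 0%N) ->
  (forall t w, x t.+1 w = vadd (x t w) (vscale eta_g (Delta t w))) ->
  (forall w, xhat 0%N w = x 0%N w) ->
  (forall t w, xhat t.+1 w =
     vadd (xhat t w) (Qs (vsub (x t.+1 w) (xhat t w)) (xi t w))) ->
  (forall t, measurable_fun [set: Omega] (xi t)) ->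
  (forall t, has_law P (xi t) Pq) ->
  (forall t, indep_elems P (xi t) (fun w => vsub (x t.+1 w) (xhat t w))) ->
  (forall t, ('E_P[fun w => vdot (vsub (x t w) (xhat t w)) (Delta t w)] = 0)%E) ->
  forall T : nat, (1 <= T)%N ->
  (\sum_(0 <= t < T) 'E_P[fun w => sqnorm (vsub (x t w) (xhat t w))]
   <= (eta_g ^+ 2 * \sum_(1 <= s < T) (1 - delta_s) ^+ s)%:E
      * \sum_(0 <= t < T.-1) 'E_P[fun w => sqnorm (Delta t w)])%E.
Proof.
move=> /andP[_ delta_le1] quantQs _ mQs eta_gt0 mDelta finDelta mx0 x_rec xhat0 xhat_rec
  mxi law_xi indep_xi orth T T1.
apply: esum_contraction_le => //.
- by rewrite subr_ge0.
- exact/exprn_ge0/ltW.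
- by move=> t; apply: expectation_ge0 => w; exact: sqnorm_ge0.
- by move=> t; apply: expectation_ge0 => w; exact: sqnorm_ge0.
- by move=> t; rewrite ge0_fin_numE //; apply: expectation_ge0 => w; exact: sqnorm_ge0.
- exact: expectation_error0.
- by move=> t; apply: expectation_error_step => //; exact: mQs.
Qed.
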